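(* Let $E$ be an IL FS encoder with $s$ states and Kraft matrix $K$, and let $L_{\max}=\max_{z\in\mathcal{Z},x\in\mathcal{X}}L[f(z,x)]$. Then for every positive integer $\ell$ and all $z,z'\in\mathcal{Z}$, $$[K^\ell]_{zz'}=\sum_{\{x^\ell\in\mathcal{X}^\ell:\ g(z,x^\ell)=z'\}}2^{-L[f(z,x^\ell)]}\le 1+\ell L_{\max},$$ and consequently, for every $z\in\mathcal{Z}$, $$\sum_{x^\ell\in\mathcal{X}^\ell}2^{-L[f(z,x^\ell)]}\le s(1+\ell L_{\max}).$$
   Context: A finite-state (FS) encoder is a quintuple $E=(\mathcal{X},\mathcal{Y},\mathcal{Z},f,g)$, where $\mathcal{X}$ is a finite source alphabet of size $\alpha$, $\mathcal{Y}$ is a finite set of binary strings (possibly containing the empty string, of length $0$), $\mathcal{Z}$ is a finite set of $s$ states, $f:\mathcal{Z}\times\mathcal{X}\to\mathcal{Y}$ is the output function and $g:\mathcal{Z}\times\mathcal{X}\to\mathcal{Z}$ is the next-state function. For $z\in\mathcal{Z}$ and $x^n=(x_1,\dots,x_n)\in\mathcal{X}^n$, set $z_1=z$, $z_{i+1}=g(z_i,x_i)$; write $g(z,x^n)=z_{n+1}$ and let $f(z,x^n)$ denote the binary string obtained by concatenating $f(z_1,x_1),\dots,f(z_n,x_n)$; its length is $L[f(z,x^n)]=\sum_{i=1}^n L[f(z_i,x_i)]$, where $L(\cdot)$ denotes the length of a binary string. The encoder is information lossless (IL) if for every $z\in\mathcal{Z}$ and every $n\ge1$, the map $x^n\mapsto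 (f(z,x^n),g(z,x^n))$ is injective on $\mathcal{X}^n$. The Kraft matrix of $E$ is the $s\times s$ nonnegative matrix $K$ with entries $K_{zz'}=\sum_{\{x\in\mathcal{X}:\ g(z,x)=z'\}}2^{-L[f(z,x)]}$ (an empty sum is $0$). *)

From HB Require Import structures.
From mathcomp Require Import all_boot all_order all_algebra.
Set Implicit Arguments. Unset Strict Implicit. Unset Printing Implicit Defensive.
Import Order.TTheory GRing.Theory Num.Theory.
Local Open Scope ring_scope.

(* Binary strings are seq bool; the
   output set Y is the (finite) image of f. *)

Fixpoint fs_next (X Z : Type) (g : Z -> X -> Z) (z : Z) (xs : seq X) : Z :=
  match xs with
  | [::] => z
  | x :: xs' => fs_next g (g z x) xs'
  end.

Fixpoint fs_out (X Z : Type) (f : Z -> X -> seq bool) (g : Z -> X -> Z)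
    (z : Z) (xs : seq X) : seq bool :=
  match xs with
  | [::] => [::]
  | x :: xs' => f z x ++ fs_out f g (g z x) xs'
  end.

Definition info_lossless (X Z : finType) (f : Z -> X -> seq bool)
    (g : Z -> X -> Z) : Prop :=
  forall (z : Z) (n : nat), (0 < n)%N ->
    forall u v : n.-tuple X,
      fs_out f g z u = fs_out f g z v -> fs_next g z u = fs_next g z v ->
      u = v.

Definition kraft_matrix (R : realFieldType) (X Z : finType)
    (f : Z -> X -> seq bool) (g : Z -> X -> Z) : 'M[R]_#|Z| :=
  \matrix_(i, j) \sum_(x : X | g (enum_val i) x == enum_val j)
                   (2%:R : R) ^- size (f (enum_val i) x).

Definition fs_Lmax (X Z : finType) (f : Z -> X -> seq bool) : nat :=
  \max_(z : Z) \max_(x : X) size (f z x).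

From HB Require Import structures.
From mathcomp Require Import all_boot all_order all_algebra.
Import Order.TTheory GRing.Theory Num.Theory.
Local Open Scope ring_scope.

(* Expanding the matrix power shows that [K^l]_{zz'} sums 2^-L[f(z,x^l)] over
   the words x^l driving z to z'.  By information losslessness, two such words
   with equal outputs coincide, so at most 2^j of them produce an output of
   length j; each contributes 2^-j, and output lengths are at most l Lmax, so
   the sum is at most 1 + l Lmax.  Summing over the s final states gives the
   second bound. *)

Lemma sum_tuple_cons (V : nmodType) (T : finType) n (F : n.+1.-tuple T -> V) :
  \sum_(t : n.+1.-tuple T) F t = \sum_(x : T) \sum_(t : n.-tuple T) F [tuple of x :: t].
Proof.
rewrite pair_big /= (reindex (fun p : T * n.-tuple T => [tuple of p.1 :: p.2])) //=.
exists (fun t : n.+1.-tuple T => (thead t, [tuple of behead t])) => [[x t] _|t _] /=.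
  by rewrite theadE; congr pair; apply: val_inj.
by rewrite [RHS]tuple_eta.
Qed.

(* Each of the N+1 length classes contributes at most 2^j * 2^-j = 1. *)
Lemma sum_exp2_length_le (R : numFieldType) (I : finType) (P : pred I)
    (len : I -> nat) (N : nat) :
  (forall i, P i -> len i <= N)%N ->
  (forall j, #|[pred i | P i & len i == j]| <= 2 ^ j)%N ->
  \sum_(i | P i) (2%:R : R) ^- len i <= N.+1%:R.
Proof.
move=> len_le card_le.
rewrite (partition_big (fun i => inord (len i) : 'I_N.+1) xpredT) //=.
apply: le_trans (_ : \sum_(j < N.+1) (1 : R) <= _); last first.
  by rewrite sumr_const card_ord.
apply: ler_sum => j _.
have classE i : P i && (inord (len i) == j) = P i && (len i == j).
  by case Pi: (P i) => //=; rewrite -val_eqE /= inordK // ltnS len_le.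
rewrite (eq_bigl _ _ classE) (eq_bigr (fun=> (2%:R : R) ^- j)); last first.
  by move=> i /andP[_ /eqP ->].
rewrite sumr_const -[_ *+ _]mulr_natr -[leRHS](mulVf (_ : (2%:R : R) ^+ j != 0)); last first.
  by rewrite expf_neq0 // pnatr_eq0.
apply: ler_wpM2l; first by rewrite invr_ge0 exprn_ge0.
by rewrite -natrX ler_nat card_le.
Qed.

Section FSEncoder.

Variables (X Z : finType) (f : Z -> X -> seq bool) (g : Z -> X -> Z).

Lemma kraft_matrix_expE (R : realFieldType) n z z' :
  (kraft_matrix R f g ^+ n) (enum_rank z) (enum_rank z')
    = \sum_(xs : n.-tuple X | fs_next g z xs == z')
        (2%:R : R) ^- size (fs_out f g z xs).
Proof.
elim: n z => [|n IH] z.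
  rewrite expr0 mxE (inj_eq enum_rank_inj) big_mkcond (big_pred1 [tuple]) /=.
    by case: (z == z'); rewrite ?invr1.
  by move=> t; rewrite /= [t]tuple0; apply/esym/eqP.
rewrite exprS -mulmxE mxE (reindex (@enum_rank Z)) /=; last first.
  by exists enum_val => i _; rewrite ?enum_rankK ?enum_valK.
under eq_bigr => z1 _ do rewrite IH mxE !enum_rankK big_mkcond mulr_suml.
rewrite exchange_big [RHS]big_mkcond sum_tuple_cons /=.
apply: eq_bigr => x _.
rewrite (bigD1 (g z x)) //= eqxx [X in _ + X]big1 ?addr0; last first.
  by move=> z1 ne; rewrite eq_sym (negbTE ne) mul0r.
rewrite mulr_sumr big_mkcond /=; apply: eq_bigr => t _.
by case: ifP => // _; rewrite size_cat exprD invfM.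
Qed.

Lemma size_fs_out_le z xs : (size (fs_out f g z xs) <= size xs * fs_Lmax f)%N.
Proof.
elim: xs z => //= x xs IH z.
rewrite size_cat mulSn leq_add //.
exact: leq_trans (@leq_bigmax X (fun x => size (f z x)) x)
                 (@leq_bigmax Z (fun z => \max_(x : X) size (f z x)) z).
Qed.

Lemma card_fs_out_size_le (IL : info_lossless f g) n z z' j : (0 < n)%N ->
  (#|[pred xs : n.-tuple X | fs_next g z xs == z' & size (fs_out f g z xs) == j]|
     <= 2 ^ j)%N.
Proof.
move=> n_gt0; set P := [pred xs | _ & _].
pose code (xs : n.-tuple X) : j.-tuple bool := insubd (nseq_tuple j false) (fs_out f g z xs).
have code_inj : {in P &, injective code}.
  move=> u v /andP[/eqP next_u size_u] /andP[/eqP next_v size_v] /(congr1 val).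
  rewrite !val_insubd size_u size_v => out_uv.
  by apply: (IL z n n_gt0); rewrite // next_u next_v.
rewrite -(card_in_imset code_inj).
by apply: leq_trans (max_card _) _; rewrite card_tuple card_bool.
Qed.

Lemma sum_fs_out_to_le (R : realFieldType) (IL : info_lossless f g) n z z' :
  (0 < n)%N ->
  \sum_(xs : n.-tuple X | fs_next g z xs == z') (2%:R : R) ^- size (fs_out f g z xs)
    <= 1 + (n * fs_Lmax f)%:R.
Proof.
move=> n_gt0; rewrite nat1r; apply: sum_exp2_length_le => [xs _|j].
  by have := size_fs_out_le z xs; rewrite size_tuple.
exact: card_fs_out_size_le.
Qed.

End FSEncoder.

Theorem mainTheorem2 (R : realFieldType) (X Z : finType)
    (f : Z -> X -> seq bool) (g : Z -> X -> Z) :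
  info_lossless f g ->
  forall ell : nat, (0 < ell)%N ->
    (forall z z' : Z,
       (kraft_matrix R f g ^+ ell) (enum_rank z) (enum_rank z')
         = \sum_(xs : ell.-tuple X | fs_next g z xs == z')
              (2%:R : R) ^- size (fs_out f g z xs)
       /\
       \sum_(xs : ell.-tuple X | fs_next g z xs == z')
              (2%:R : R) ^- size (fs_out f g z xs)
         <= 1 + (ell * fs_Lmax f)%:R)
    /\
    (forall z : Z,
       \sum_(xs : ell.-tuple X) (2%:R : R) ^- size (fs_out f g z xs)
         <= #|Z|%:R * (1 + (ell * fs_Lmax f)%:R)).
Proof.
move=> IL ell ell_gt0; split=> [z z'|z].
  by split; [apply: kraft_matrix_expE | apply: sum_fs_out_to_le].
rewrite (partition_big (fun xs : ell.-tuple X => fs_next g z xs) xpredT) //=.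
apply: le_trans (_ : \sum_(z' : Z) (1 + (ell * fs_Lmax f)%:R) <= _).
  by apply: ler_sum => z' _; apply: sum_fs_out_to_le.
by rewrite sumr_const mulr_natl.
Qed.
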